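(* Every $A'$-group is a solvable $A$-group, i.e. a solvable finite group all of whose Sylow subgroups are abelian.
   Context: $A'$-groups are defined inductively: (1) finite abelian groups are $A'$-groups; (2) if $\mathcal G$ is an $A'$-group and $H$ is a finite abelian group of order prime to $|\mathcal G|$, then $H\rtimes_\mu\mathcal G$ is an $A'$-group for every action $\mu$ of $\mathcal G$ on $H$; (3) if $\mathcal G_1$ and $\mathcal G_2$ are $A'$-groups, then $\mathcal G_1\times\mathcal G_2$ is an $A'$-group. *)

From mathcomp Require Import all_boot all_fingroup all_solvable.
Set Implicit Arguments. Unset Strict Implicit. Unset Printing Implicit Defensive.
Local Open Scope group_scope.

(* A'-groups, realised as subgroups of an ambient finite group type gT.
   The external constructions H ⋊_μ G and G1 × G2 are rendered by their
   internal counterparts: G = H ><| K (H normal abelian complement-pair with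
   K) and G = G1 \x G2.  Every abstract A'-group is isomorphic to a group
   satisfying this predicate in a suitable gT and conversely. *)
Inductive Aprime_group (gT : finGroupType) : {group gT} -> Prop :=
| Aprime_abelian (G : {group gT}) :
    abelian G -> Aprime_group G
| Aprime_sdprod (G H K : {group gT}) :
    abelian H -> coprime #|H| #|K| -> Aprime_group K ->
    H ><| K = G -> Aprime_group G
| Aprime_dprod (G G1 G2 : {group gT}) :
    Aprime_group G1 -> Aprime_group G2 -> G1 \x G2 = G -> Aprime_group G.

Definition A_group (gT : finGroupType) (G : {group gT}) : Prop :=
  forall (p : nat) (P : {group gT}), prime p -> p.-Sylow(G) P -> abelian P.

From mathcomp Require Import all_boot all_fingroup all_solvable.
Set Implicit Arguments. Unset Strict Implicit. Unset Printing Implicit Defensive.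
Local Open Scope group_scope.

(* Solvability passes through normal extensions.  For the A-property, Sylow
   p-subgroups are all conjugate, so it suffices to exhibit one abelian Sylow
   p-subgroup for each prime p.  In a coprime product H ><| K, both H and K
   are Hall subgroups (for the prime sets \pi(H) and its complement), so a
   Sylow p-subgroup of whichever of them covers p is Sylow in G.  In a direct
   product, the product of Sylow p-subgroups of the factors is Sylow. *)

Section AGroups.

Variable gT : finGroupType.
Implicit Types G H K S : {group gT}.

Lemma sdprod_sol G H K : H ><| K = G -> solvable G = solvable H && solvable K.
Proof.
move=> defG; have [nsHG _ _ _ _] := sdprod_context defG.
by rewrite (series_sol nsHG) (isog_sol (sdprod_isog defG)).
Qed.

Lemma A_groupP G :
  (forall p, prime p -> exists2 S : {group gT}, p.-Sylow(G) S & abelian S) ->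
  A_group G.
Proof.
move=> abSyl p P p_pr sylP; have [S sylS cS] := abSyl p p_pr.
by have [x _ ->] := Sylow_trans sylS sylP; rewrite abelianJ.
Qed.

Lemma abelian_A_group G : abelian G -> A_group G.
Proof. by move=> cG p P _ /pHall_sub sPG; apply: abelianS cG. Qed.

Lemma A_group_Hall_Sylow pi p G H :
  pi.-Hall(G) H -> p \in pi -> prime p -> A_group H ->
  exists2 S : {group gT}, p.-Sylow(G) S & abelian S.
Proof.
move=> hallH pi_p p_pr AH; have [S sylS] := Sylow_exists p H.
by exists S; [apply: subHall_Sylow hallH pi_p sylS | apply: AH sylS].
Qed.

Lemma coprime_sdprod_A_group G H K :
  coprime #|H| #|K| -> H ><| K = G -> A_group H -> A_group K -> A_group G.
Proof.
move=> coHK defG AH AK; have hallH : \pi(H).-Hall(G) H.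
  by apply: Hall_pi; rewrite -(coprime_sdprod_Hall_l defG).
have hallK : \pi(H)^'.-Hall(G) K.
  by rewrite -(compl_pHall _ hallH) sdprod_compl.
apply: A_groupP => p p_pr; have [piHp | pi'Hp] := boolP (p \in \pi(H)).
  exact: A_group_Hall_Sylow hallH piHp p_pr AH.
by apply: A_group_Hall_Sylow hallK _ p_pr AK; rewrite inE.
Qed.

Lemma dprod_pHall pi G (G1 G2 S1 S2 : {group gT}) :
  G1 \x G2 = G -> pi.-Hall(G1) S1 -> pi.-Hall(G2) S2 ->
  pi.-Hall(G) (S1 <*> S2) /\ S1 \x S2 = S1 <*> S2.
Proof.
move=> defG hallS1 hallS2; have [_ _ cG12 tiG12] := dprodP defG.
have [/andP[sG1G _] /andP[sG2G _]] := dprod_normal2 defG.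
have sS1 := pHall_sub hallS1; have sS2 := pHall_sub hallS2.
have cS12 : S2 \subset 'C(S1) by rewrite (subset_trans sS2) // (centsS sS1).
have tiS12 : S1 :&: S2 = 1 by apply/trivgP; rewrite -tiG12 setISS.
have defS := dprodEY cS12 tiS12; split=> //.
rewrite pHallE join_subG (subset_trans sS1) ?(subset_trans sS2) //=.
rewrite -(dprod_card defS) -(dprod_card defG) partnM ?cardG_gt0 //.
by rewrite (card_Hall hallS1) (card_Hall hallS2).
Qed.

Lemma dprod_A_group G (G1 G2 : {group gT}) :
  G1 \x G2 = G -> A_group G1 -> A_group G2 -> A_group G.
Proof.
move=> defG AG1 AG2; apply: A_groupP => p p_pr.
have [S1 sylS1] := Sylow_exists p G1; have [S2 sylS2] := Sylow_exists p G2.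
have [sylS defS] := dprod_pHall defG sylS1 sylS2.
exists (S1 <*> S2)%G => //=; have [_ _ cS12 _] := dprodP defS.
by rewrite abelianY cS12 (AG1 p) ?(AG2 p).
Qed.

End AGroups.

Theorem mainTheorem4 (gT : finGroupType) (G : {group gT}) :
  Aprime_group G -> solvable G /\ A_group G.
Proof.
elim=> {G} [G cG | G H K cH coHK _ [solK AK] defG
           | G G1 G2 _ [solG1 AG1] _ [solG2 AG2] defG].
- by split; [apply: abelian_sol | apply: abelian_A_group].
- split; first by rewrite (sdprod_sol defG) abelian_sol.
  exact: coprime_sdprod_A_group coHK defG (abelian_A_group cH) AK.
- split; first by rewrite (sdprod_sol (dprodWsd defG)) solG1.
  exact: dprod_A_group defG AG1 AG2.
Qed.
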